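(* Let $G$ be a finite group and let $\mathsf{T}$ be a $G$-transfer system. Then any two minimal generating sets of $\mathsf{T}$ have the same cardinality. Consequently there is a well-defined map $\mathfrak{m}$ from the set of $G$-transfer systems to $\mathbb{N}$ sending a transfer system $\mathsf{T}$ to the cardinality of a minimal generating set of $\mathsf{T}$.
   Context: For a finite group $G$, an arrow is a pair $(H,K)$ of subgroups of $G$ with $H \leqslant K$; it is an identity arrow if $H=K$. A $G$-transfer system is a set $\mathsf{T}$ of arrows which contains all identity arrows and is closed under: composition (if $(H,K),(K,L)\in\mathsf{T}$ then $(H,L)\in\mathsf{T}$); conjugation (if $(H,K)\in\mathsf{T}$ then $(gHg^{-1},gKg^{-1})\in\mathsf{T}$ for all $g\in G$); restriction (if $(H,K)\in\mathsf{T}$ and $L\leqslant K$ then $(H\cap L,L)\in\mathsf{T}$). For a set $S$ of non-identity arrows, $\langle S\rangle$ denotes the smallest $G$-transfer system containing $S$. A minimal generating set for a transfer system $\mathsf{T}$ is a set $S\subseteq\mathsf{T}$ of non-identity arrows with $\langle S\rangle=\mathsf{T}$ and $\langle S\setminus\{s\}\rangle\subsetneq\mathsf{T}$ for every $s\in S$. *)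

From mathcomp Require Import all_boot all_fingroup.
Set Implicit Arguments. Unset Strict Implicit. Unset Printing Implicit Defensive.
Import GroupScope.

Definition arrow (gT : finGroupType) := ({group gT} * {group gT})%type.

Definition is_arrow (gT : finGroupType) (G : {group gT}) (a : arrow gT) : bool :=
  (a.1 \subset a.2) && (a.2 \subset G).

Definition is_identity_arrow (gT : finGroupType) (a : arrow gT) : bool :=
  a.1 == a.2.

Definition transfer_systemb (gT : finGroupType) (G : {group gT})
    (T : {set arrow gT}) : bool :=
  [&& [forall a in T, is_arrow G a],
      [forall H : {group gT}, (H \subset G) ==> ((H, H) \in T)],
      [forall H : {group gT}, forall K : {group gT}, forall L : {group gT},
          ((H, K) \in T) && ((K, L) \in T) ==> ((H, L) \in T)],
      [forall H : {group gT}, forall K : {group gT}, forall g : gT,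
          ((H, K) \in T) && (g \in G) ==> (((H :^ g)%G, (K :^ g)%G) \in T)] &
      [forall H : {group gT}, forall K : {group gT}, forall L : {group gT},
          ((H, K) \in T) && (L \subset K) ==> (((H :&: L)%G, L) \in T)]].

Definition transfer_system (gT : finGroupType) (G : {group gT})
    (T : {set arrow gT}) : Prop := transfer_systemb G T.

Definition generated (gT : finGroupType) (G : {group gT})
    (S : {set arrow gT}) : {set arrow gT} :=
  [set a | [forall T : {set arrow gT},
     (S \subset T) && transfer_systemb G T ==> (a \in T)]].

Definition minimal_generating_set (gT : finGroupType) (G : {group gT})
    (T S : {set arrow gT}) : Prop :=
  [/\ S \subset T,
      (forall a, a \in S -> ~~ is_identity_arrow a),
      generated G S = T &
      (forall s, s \in S -> generated G (S :\ s) \proper T)].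

From Pilot Require Import Defs.
From mathcomp Require Import all_boot all_fingroup zify.
Set Implicit Arguments. Unset Strict Implicit. Unset Printing Implicit Defensive.
Import GroupScope.

(* Call an arrow of T indecomposable if it is not an identity and has no proper
   factorisation in T, and preorder arrows by "m is a restriction of a conjugate of q".
   Every arrow of T is a composite of indecomposables, each lying below a maximal one,
   so T is generated by its maximal indecomposables; conversely any generating set S
   must have each indecomposable below one of its elements, since the arrows all of
   whose indecomposable restrictions are so covered form a transfer system containing S.
   By induction on factorisations, an arrow of T has only one maximal indecomposable
   restriction, hence maximal indecomposables below a common arrow are conjugate.
   Minimality of S1 gives each x in S1 a maximal indecomposable below x and below no
   other element of S1; sending x to an element of S2 above it is then injective. *)

Section Arrows.
Variables (gT : finGroupType) (G : {group gT}).
Implicit Types (T S U : {set arrow gT}) (a b m p q x y : arrow gT) (H K L M : {group gT}).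

Definition conj_arrow (g : gT) a : arrow gT := ((a.1 :^ g)%G, (a.2 :^ g)%G).
Definition res_arrow L a : arrow gT := ((a.1 :&: L)%G, L).

Lemma eq_arrow a b : a.1 :=: b.1 -> a.2 :=: b.2 -> a = b.
Proof. by case: a b => [a1 a2] [b1 b2] /= e1 e2; congr pair; apply: val_inj. Qed.

Lemma eq_groupE H K : (H == K) = (H :==: K).
Proof. by rewrite -val_eqE. Qed.

Lemma conj_arrowK g : cancel (conj_arrow g) (conj_arrow g^-1).
Proof. by move=> a; apply: eq_arrow => /=; rewrite conjsgK. Qed.

Lemma res_arrow_id a : a.1 \subset a.2 -> res_arrow a.2 a = a.
Proof. by move=> sa; apply: eq_arrow => //=; rewrite (setIidPl sa). Qed.

Lemma res_arrowA L L' a : L' \subset L -> res_arrow L' (res_arrow L a) = res_arrow L' a.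
Proof. by move=> sL; apply: eq_arrow => //=; rewrite -setIA (setIidPr sL). Qed.

Lemma ts_is_arrow T a : transfer_systemb G T -> a \in T -> is_arrow G a.
Proof. by case/and5P => /forall_inP h _ _ _ _ /h. Qed.

Lemma ts_refl T H : transfer_systemb G T -> H \subset G -> (H, H) \in T.
Proof. by case/and5P => _ /forallP h _ _ _; apply/implyP. Qed.

Lemma ts_trans T H K L : transfer_systemb G T -> (H, K) \in T -> (K, L) \in T -> (H, L) \in T.
Proof.
case/and5P => _ _ /forallP h _ _ hk kl.
by move: (h H) => /forallP/(_ K)/forallP/(_ L)/implyP; apply; rewrite hk kl.
Qed.

Lemma ts_conj T a g : transfer_systemb G T -> a \in T -> g \in G -> conj_arrow g a \in T.
Proof.
case/and5P => _ _ _ /forallP h _; case: a => A B hab hg.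
by move: (h A) => /forallP/(_ B)/forallP/(_ g)/implyP; apply; rewrite hab hg.
Qed.

Lemma ts_res T a L : transfer_systemb G T -> a \in T -> L \subset a.2 -> res_arrow L a \in T.
Proof.
case/and5P => _ _ _ _ /forallP h; case: a => A B hab hL.
by move: (h A) => /forallP/(_ B)/forallP/(_ L)/implyP; apply; rewrite hab hL.
Qed.

Lemma generated_min S U : S \subset U -> transfer_systemb G U -> Defs.generated G S \subset U.
Proof.
move=> sSU tsU; apply/subsetP => a; rewrite inE => /forallP/(_ U).
by rewrite sSU tsU; apply.
Qed.

Lemma sub_generated S U :
  (forall T, S \subset T -> transfer_systemb G T -> U \subset T) -> U \subset Defs.generated G S.
Proof.
move=> sUT; apply/subsetP => a aU; rewrite inE; apply/forallP => T.
by apply/implyP => /andP[sST tsT]; apply: subsetP (sUT T sST tsT) a aU.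
Qed.

Definition restricts q m : bool :=
  [exists g in G, exists L : {group gT},
     (L \subset q.2 :^ g) && (m == res_arrow L (conj_arrow g q))].

Lemma restrictsP q m :
  reflect (exists2 g, g \in G & exists2 L : {group gT}, L \subset q.2 :^ g &
             m = res_arrow L (conj_arrow g q))
          (restricts q m).
Proof.
apply: (iffP exists_inP) => [[g Gg /existsP[L /andP[sL /eqP->]]]|[g Gg [L sL ->]]].
  by exists g => //; exists L.
by exists g => //; apply/existsP; exists L; rewrite sL eqxx.
Qed.

Lemma restricts_trans q m p : restricts q m -> restricts m p -> restricts q p.
Proof.
move=> /restrictsP[g Gg [L sL ->]] /restrictsP[h Gh [L' /= sL' ->]].
apply/restrictsP; exists (g * h); first exact: groupM.
have sL'L : L' \subset q.2 :^ (g * h) by rewrite conjsgM (subset_trans sL') ?conjSg.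
exists L' => //; apply: eq_arrow => //=.
by rewrite conjIg conjsgM -setIA (setIidPr sL').
Qed.

Lemma restricts_res q L : L \subset q.2 -> restricts q (res_arrow L q).
Proof.
move=> sL; apply/restrictsP; exists 1; rewrite ?group1 //.
by exists L; rewrite ?conjsg1 //; apply: eq_arrow => /=; rewrite ?conjsg1.
Qed.

Lemma restricts_refl q : q.1 \subset q.2 -> restricts q q.
Proof. by move=> sq; rewrite -{2}(res_arrow_id sq) restricts_res. Qed.

Lemma restricts_sub q m : restricts q m -> m.1 \subset m.2.
Proof. by case/restrictsP=> g _ [L _ ->]; apply: subsetIr. Qed.

Lemma restricts_conj q m g : g \in G -> restricts q m -> restricts q (conj_arrow g m).
Proof.
move=> Gg qm; have sm := restricts_sub qm.
apply: restricts_trans qm _; apply/restrictsP; exists g => //.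
by exists (m.2 :^ g)%G => //; apply: eq_arrow => //=; rewrite -conjIg (setIidPl sm).
Qed.

Lemma restricts_card q m : restricts q m -> #|m.2| <= #|q.2|.
Proof. by case/restrictsP=> g _ [L sL ->]; rewrite -(cardJg q.2 g) subset_leq_card. Qed.

Lemma ts_restricts T q m : transfer_systemb G T -> q \in T -> restricts q m -> m \in T.
Proof. by move=> tsT Tq /restrictsP[g Gg [L sL ->]]; rewrite ts_res ?ts_conj. Qed.

Definition covered_by S m : bool := [exists x in S, restricts x m].

Section TransferSystem.
Variable T : {set arrow gT}.
Hypothesis tsT : transfer_systemb G T.

Lemma ts_sub a : a \in T -> a.1 \subset a.2.
Proof. by case/(ts_is_arrow tsT)/andP. Qed.

Lemma ts_subG a : a \in T -> a.2 \subset G.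
Proof. by case/(ts_is_arrow tsT)/andP. Qed.

Lemma ts_factor_ind (P : {group gT} -> {group gT} -> Prop) :
  (forall H K, (H, K) \in T ->
     (forall M, (H, M) \in T -> (M, K) \in T -> M != H -> M != K -> P H M /\ P M K) ->
     P H K) ->
  forall H K, (H, K) \in T -> P H K.
Proof.
move=> IHP H K; have [n] := ubnP (#|K| - #|H|); elim: n H K => // n IH H K ltn TH.
apply: (IHP H K TH) => M HM MK nMH nMK.
have ltHM : #|H| < #|M|.
  by apply: proper_card; rewrite properEneq (ts_sub HM) andbT eq_sym val_eqE nMH.
have ltMK : #|M| < #|K|.
  by apply: proper_card; rewrite properEneq (ts_sub MK) andbT val_eqE nMK.
by split; [apply: IH HM | apply: IH MK]; lia.
Qed.

Definition indecomposable a : bool :=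
  [&& a \in T, a.1 != a.2 &
      [forall M : {group gT}, ((a.1, M) \in T) && ((M, a.2) \in T) ==> (M == a.1) || (M == a.2)]].

(* A restriction [m] of [q] with [#|q.2| = #|m.2|] is a conjugate of [q], so this is
   maximality up to conjugacy. *)
Definition max_indecomposable m : bool :=
  indecomposable m && [forall q, indecomposable q && restricts q m ==> (#|q.2| == #|m.2|)].

Lemma indecomposable_ts a : indecomposable a -> a \in T.
Proof. by case/and3P. Qed.

Lemma max_indecomposableW m : max_indecomposable m -> indecomposable m.
Proof. by case/andP. Qed.

Lemma decomposable H K : (H, K) \in T -> H != K -> ~~ indecomposable (H, K) ->
  exists M, [/\ (H, M) \in T, (M, K) \in T, M != H & M != K].
Proof.
move=> TH nHK; rewrite /indecomposable TH nHK /= negb_forall => /existsP[M].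
by rewrite negb_imply negb_or => /andP[/andP[TH' TK] /andP[nMH nMK]]; exists M.
Qed.

Lemma res_id_not_indecomposable H L : L \subset H -> ~~ indecomposable (res_arrow L (H, H)).
Proof. by move=> sL; rewrite /indecomposable /= eq_groupE /= (setIidPr sL) eqxx andbF. Qed.

Lemma indecomposable_conj a g : g \in G -> indecomposable a -> indecomposable (conj_arrow g a).
Proof.
move=> Gg /and3P[Ta na /forallP ind]; apply/and3P; split; first exact: ts_conj.
  by apply: contra na; rewrite !eq_groupE /= => /eqP/conjsg_inj ->.
apply/forallP => M; apply/implyP => /andP[T1 T2].
have Gg' : g^-1 \in G by rewrite groupV.
have e1 : (a.1, (M :^ g^-1)%G) = conj_arrow g^-1 ((a.1 :^ g)%G, M).
  by apply: eq_arrow => /=; rewrite ?conjsgK.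
have e2 : ((M :^ g^-1)%G, a.2) = conj_arrow g^-1 (M, (a.2 :^ g)%G).
  by apply: eq_arrow => /=; rewrite ?conjsgK.
have := ind (M :^ g^-1)%G; rewrite e1 e2 !ts_conj // !eq_groupE /=.
by case/orP=> /eqP <-; rewrite conjsgKV eqxx ?orbT.
Qed.

Lemma max_indecomposable_conj m g :
  g \in G -> max_indecomposable m -> max_indecomposable (conj_arrow g m).
Proof.
move=> Gg /andP[im /forallP maxm]; rewrite /max_indecomposable indecomposable_conj //=.
apply/forallP => q; apply/implyP => /andP[iq qm].
have Gg' : g^-1 \in G by rewrite groupV.
have := restricts_conj Gg' qm; rewrite conj_arrowK => qm'.
by have /implyP := maxm q; rewrite iq qm' cardJg; apply.
Qed.

(* Restricting H -> M -> K to L factors the indecomposable restriction, so one of the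
   two factors is an identity. *)
Lemma indecomposable_res_factor H M K L : (H, M) \in T -> (M, K) \in T -> L \subset K ->
  indecomposable (res_arrow L (H, K)) -> L \subset M \/ M :&: L = H :&: L.
Proof.
move=> TH TK sLK /and3P[_ _ /forallP/(_ (M :&: L)%G)] /=.
have -> : ((H :&: L)%G, (M :&: L)%G) = res_arrow (M :&: L)%G (H, M).
  by apply: eq_arrow => //=; rewrite setIA (setIidPl (ts_sub TH)).
rewrite ts_res ?subsetIl // (ts_res tsT TK sLK) !eq_groupE /=.
by case/orP=> /eqP e; [right | left; rewrite -e subsetIl].
Qed.

Lemma max_res_indecomposable H K L : indecomposable (H, K) -> L \subset K ->
  max_indecomposable (res_arrow L (H, K)) -> L :=: K.
Proof.
move=> iHK sLK /andP[_ /forallP/(_ (H, K))]; rewrite iHK restricts_res //= => /eqP eLK.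
by apply/eqP; rewrite eqEcard sLK eLK leqnn.
Qed.

Lemma max_res_neq H K L : L \subset K -> max_indecomposable (res_arrow L (H, K)) -> H != K.
Proof.
move=> sLK /max_indecomposableW; apply: contraTneq => eHK.
by rewrite -eHK in sLK *; apply: res_id_not_indecomposable.
Qed.

Lemma max_res_sup H K L : (H, K) \in T -> L \subset K ->
  max_indecomposable (res_arrow L (H, K)) -> H \subset L.
Proof.
move: H K; apply: ts_factor_ind => H K TH IH sLK maxL.
have [iHK|dHK] := boolP (indecomposable (H, K)).
  by rewrite (max_res_indecomposable iHK sLK maxL) (ts_sub TH).
have [M [TH' TK nMH nMK]] := decomposable TH (max_res_neq sLK maxL) dHK.
have [IHH IHK] := IH M TH' TK nMH nMK.
have [sLM|eML] := indecomposable_res_factor TH' TK sLK (max_indecomposableW maxL).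
  exact: IHH.
have eres : res_arrow L (H, K) = res_arrow L (M, K) by apply: eq_arrow => /=.
by rewrite (subset_trans (ts_sub TH')) // IHK -?eres.
Qed.

Lemma max_res_sub_factor H M K L : (H, M) \in T -> (M, K) \in T -> M != H -> L \subset K ->
  max_indecomposable (res_arrow L (H, K)) -> L \subset M.
Proof.
move=> TH TK nMH sLK maxL.
have [//|eML] := indecomposable_res_factor TH TK sLK (max_indecomposableW maxL).
have sHL := max_res_sup (ts_trans tsT TH TK) sLK maxL.
have eres : res_arrow L (H, K) = res_arrow L (M, K) by apply: eq_arrow => /=.
have sML : M \subset L by apply: max_res_sup TK sLK _; rewrite -eres.
by move: nMH eML; rewrite eq_groupE (setIidPl sHL) (setIidPl sML) => /eqP.
Qed.

Lemma max_res_unique H K L1 L2 : (H, K) \in T -> L1 \subset K -> L2 \subset K ->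
  max_indecomposable (res_arrow L1 (H, K)) -> max_indecomposable (res_arrow L2 (H, K)) ->
  L1 :=: L2.
Proof.
move: H K; apply: ts_factor_ind => H K TH IH sL1 sL2 max1 max2.
have [iHK|dHK] := boolP (indecomposable (H, K)).
  by rewrite (max_res_indecomposable iHK sL1 max1) (max_res_indecomposable iHK sL2 max2).
have [M [TH' TK nMH nMK]] := decomposable TH (max_res_neq sL1 max1) dHK.
have [IHH _] := IH M TH' TK nMH nMK.
by apply: IHH; rewrite ?(max_res_sub_factor TH' TK nMH).
Qed.

Lemma max_restricts_common y m1 m2 : y \in T -> restricts y m1 -> restricts y m2 ->
  max_indecomposable m1 -> max_indecomposable m2 -> restricts m1 m2.
Proof.
move=> Ty /restrictsP[g1 Gg1 [L1 sL1 ->]] /restrictsP[g2 Gg2 [L2 sL2 ->]] max1 max2.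
set h := g2^-1 * g1; have Gh : h \in G by rewrite groupM ?groupV.
have eh : conj_arrow h (res_arrow L2 (conj_arrow g2 y)) = res_arrow (L2 :^ h)%G (conj_arrow g1 y).
  by apply: eq_arrow => //=; rewrite conjIg -conjsgM /h mulKVg.
have sL2h : L2 :^ h \subset (conj_arrow g1 y).2.
  by rewrite /= /h conjsgM sub_conjg conjsgK sub_conjgV.
have := max_indecomposable_conj Gh max2; rewrite eh => max2h.
have eL := max_res_unique (ts_conj tsT Ty Gg1) sL1 sL2h max1 max2h.
have -> : res_arrow L2 (conj_arrow g2 y) = conj_arrow h^-1 (res_arrow L1 (conj_arrow g1 y)).
  by apply: (canRL (conj_arrowK h)); rewrite eh; apply: eq_arrow => //=; rewrite eL.
by rewrite restricts_conj ?groupV // restricts_refl ?subsetIr.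
Qed.

Lemma max_indecomposable_above p :
  indecomposable p -> exists2 m, max_indecomposable m & restricts m p.
Proof.
move=> ip; pose above q := indecomposable q && restricts q p.
have above_p : above p by rewrite /above ip restricts_refl // ts_sub // indecomposable_ts.
case: (arg_maxnP (fun q => #|q.2|) above_p) => m /andP[im mp] maxm.
exists m => //; rewrite /max_indecomposable im; apply/forallP => q.
apply/implyP => /andP[iq qm].
rewrite eqn_leq (restricts_card qm) andbT.
by apply: maxm; rewrite /above iq (restricts_trans qm mp).
Qed.

Lemma max_indecomposable_generate T' : transfer_systemb G T' ->
  (forall m, max_indecomposable m -> m \in T') -> T \subset T'.
Proof.
move=> tsT' maxT'.
have indT' p : indecomposable p -> p \in T'.
  by case/max_indecomposable_above => m /maxT' T'm mp; apply: ts_restricts tsT' T'm mp.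
apply/subsetP => -[H K]; move: H K; apply: ts_factor_ind => H K TH IH.
have [/indT' //|] := boolP (indecomposable (H, K)).
have [eHK|nHK] := eqVneq H K; first by rewrite -eHK ts_refl // eHK (ts_subG TH).
case/(decomposable TH nHK) => M [TH' TK nMH nMK].
by have [] := IH M TH' TK nMH nMK; apply: ts_trans.
Qed.

Definition res_covered S a : bool :=
  [forall L : {group gT},
     (L \subset a.2) && indecomposable (res_arrow L a) ==> covered_by S (res_arrow L a)].

Lemma res_coveredP S a :
  reflect (forall L, L \subset a.2 -> indecomposable (res_arrow L a) ->
             covered_by S (res_arrow L a))
          (res_covered S a).
Proof.
apply: (iffP forallP) => [cov L sL iL | cov L]; last by apply/implyP => /andP[]; apply: cov.
by have /implyP := cov L; apply; rewrite sL iL.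
Qed.

Lemma res_covered_id S H : res_covered S (H, H).
Proof. by apply/res_coveredP => L sL; rewrite (negbTE (res_id_not_indecomposable sL)). Qed.

Lemma res_covered_trans S H M K : (H, M) \in T -> (M, K) \in T ->
  res_covered S (H, M) -> res_covered S (M, K) -> res_covered S (H, K).
Proof.
move=> TH TK /res_coveredP covH /res_coveredP covK; apply/res_coveredP => L sL iL.
have [sLM|eML] := indecomposable_res_factor TH TK sL iL; first exact: covH.
have eres : res_arrow L (H, K) = res_arrow L (M, K) by apply: eq_arrow => /=.
by rewrite eres in iL *; apply: covK.
Qed.

Lemma res_covered_conj S a g : g \in G -> res_covered S a -> res_covered S (conj_arrow g a).
Proof.
move=> Gg /res_coveredP cov; apply/res_coveredP => L sL iL.
have sLg : (L :^ g^-1)%G \subset a.2 by rewrite /= sub_conjgV.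
have eres : res_arrow L (conj_arrow g a) = conj_arrow g (res_arrow (L :^ g^-1)%G a).
  by apply: eq_arrow => /=; rewrite ?conjIg conjsgKV.
rewrite eres in iL *; have := indecomposable_conj (groupVr Gg) iL.
rewrite conj_arrowK => /(cov _ sLg)/exists_inP[s Ss sL'].
by apply/exists_inP; exists s => //; apply: restricts_conj.
Qed.

Lemma res_covered_res S a L : L \subset a.2 -> res_covered S a -> res_covered S (res_arrow L a).
Proof.
move=> sL /res_coveredP cov; apply/res_coveredP => L' sL'.
by rewrite res_arrowA //; apply: cov; apply: subset_trans sL' sL.
Qed.

Lemma ts_res_covered S : transfer_systemb G [set a in T | res_covered S a].
Proof.
apply/and5P; split.
- by apply/forall_inP => a; rewrite inE => /andP[/(ts_is_arrow tsT)].
- by apply/forallP => H; apply/implyP => sHG; rewrite inE ts_refl ?res_covered_id.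
- apply/forallP => H; apply/forallP => K; apply/forallP => L; apply/implyP.
  rewrite !inE => /andP[/andP[TH covH] /andP[TK covK]].
  by rewrite (ts_trans tsT TH TK) (res_covered_trans TH TK covH covK).
- apply/forallP => H; apply/forallP => K; apply/forallP => g; apply/implyP.
  rewrite !inE => /andP[/andP[TH covH] Gg].
  by rewrite (ts_conj tsT TH Gg) (res_covered_conj Gg covH).
- apply/forallP => H; apply/forallP => K; apply/forallP => L; apply/implyP.
  rewrite !inE => /andP[/andP[TH covH] sLK].
  by rewrite (ts_res tsT TH sLK) (@res_covered_res S (H, K) L sLK covH).
Qed.

Lemma generating_covers S p : S \subset T -> Defs.generated G S = T ->
  indecomposable p -> covered_by S p.
Proof.
move=> sST genS ip.
have sSU : S \subset [set a in T | res_covered S a].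
  apply/subsetP => s Ss; rewrite inE (subsetP sST _ Ss); apply/res_coveredP => L sL _.
  by apply/exists_inP; exists s => //; apply: restricts_res.
have : p \in [set a in T | res_covered S a].
  by apply: subsetP (generated_min sSU (ts_res_covered S)) _ _; rewrite genS indecomposable_ts.
rewrite inE => /andP[Tp /res_coveredP cov].
by have := cov p.2 (subxx _); rewrite res_arrow_id ?ts_sub //; apply.
Qed.

Lemma minimal_generating_private S x : S \subset T -> Defs.generated G S = T -> x \in S ->
  Defs.generated G (S :\ x) \proper T ->
  exists m, [&& max_indecomposable m, restricts x m & ~~ covered_by (S :\ x) m].
Proof.
move=> sST genS Sx ltS; apply/existsP; apply: contraTT ltS => /existsPn noprivate.
rewrite properE; suff -> : T \subset Defs.generated G (S :\ x) by rewrite andbF.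
apply: sub_generated => T' sST' tsT'; apply: (max_indecomposable_generate tsT') => m maxm.
have /exists_inP[s Ss sm] := generating_covers sST genS (max_indecomposableW maxm).
have [esx|nsx] := eqVneq s x.
  subst s; move: (noprivate m); rewrite maxm sm /= negbK => /exists_inP[s' Ss' s'm].
  exact: ts_restricts tsT' (subsetP sST' _ Ss') s'm.
by apply: ts_restricts tsT' (subsetP sST' _ _) sm; rewrite !inE nsx.
Qed.

Lemma minimal_generating_set_card_le S1 S2 :
  minimal_generating_set G T S1 -> minimal_generating_set G T S2 -> #|S1| <= #|S2|.
Proof.
case=> sS1T _ gen1 min1 [sS2T _ gen2 _].
pose private_above x y := [exists m,
  [&& max_indecomposable m, restricts x m, ~~ covered_by (S1 :\ x) m & restricts y m]].
pose f x := odflt x [pick y in S2 | private_above x y].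
have f_spec x : x \in S1 -> (f x \in S2) && private_above x (f x).
  move=> S1x; rewrite /f; case: pickP => [y /andP[] //|none].
  have [m /and3P[maxm xm privm]] := minimal_generating_private sS1T gen1 S1x (min1 x S1x).
  have /exists_inP[y S2y ym] := generating_covers sS2T gen2 (max_indecomposableW maxm).
  have /negP[] := none y; rewrite S2y /=.
  by apply/existsP; exists m; rewrite maxm xm privm ym.
have f_inj : {in S1 &, injective f}.
  move=> x x' S1x S1x' efx; apply/eqP; apply: contraT => nxx'.
  have /andP[S2fx /existsP[m /and4P[maxm xm _ fxm]]] := f_spec x S1x.
  have /andP[_ /existsP[m' /and4P[maxm' _ privm' fxm']]] := f_spec x' S1x'.
  rewrite -efx in fxm'.
  have mm' := max_restricts_common (subsetP sS2T _ S2fx) fxm fxm' maxm maxm'.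
  case/negP: privm'; apply/exists_inP; exists x; first by rewrite !inE nxx' S1x.
  exact: restricts_trans xm mm'.
rewrite -(card_in_imset f_inj); apply: subset_leq_card.
by apply/subsetP => y /imsetP[x S1x ->]; case/andP: (f_spec x S1x).
Qed.

End TransferSystem.
End Arrows.

Theorem corollary2p14 (gT : finGroupType) (G : {group gT})
    (T S1 S2 : {set arrow gT}) :
  transfer_system G T ->
  minimal_generating_set G T S1 ->
  minimal_generating_set G T S2 ->
  #|S1| = #|S2|.
Proof.
move=> tsT min1 min2; apply/eqP; rewrite eqn_leq.
by rewrite !(minimal_generating_set_card_le tsT).
Qed.
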